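(* Let $N(x)=\frac{1}{\sqrt{2\pi}}\int_{-\infty}^x e^{-t^2/2}\,dt$ be the standard normal cumulative distribution function. For $\alpha>0$ define \[ \chi_\alpha(x) := N\Big(\tfrac{\alpha}{2}\big(x-\tfrac{1}{x}\big)\Big) - e^{\alpha^2/2}\, N\Big(-\tfrac{\alpha}{2}\big(x+\tfrac{1}{x}\big)\Big), \qquad x>0. \] Fix $S>0$, $X>0$, $T>0$ with $X\neq S$, and for $\sigma>0$ let \[ \mathscr{C}(\sigma) := S\,N(d_1) - X\,N(d_2),\qquad d_1=\frac{\log(S/X)}{\sigma\sqrt{T}}+\frac{\sigma\sqrt{T}}{2},\quad d_2=\frac{\log(S/X)}{\sigma\sqrt{T}}-\frac{\sigma\sqrt{T}}{2}. \] Put $\alpha:=\sqrt{2\,|\log(S/X)|}$. Then for all $\sigma>0$, \[ \mathscr{C}(\sigma)=\begin{cases} S\,\chi_\alpha\!\left(\frac{\sigma\sqrt{T}}{\alpha}\right) & \text{if } X>S,\\[2mm] S-X+X\,\chi_\alpha\!\left(\frac{\sigma\sqrt{T}}{\alpha}\right) & \text{if } X<S.\end{cases} \]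
   Context: $\mathscr{C}(\sigma)$ is the Black–Scholes price of a European call as a function of the volatility $\sigma$, where $S$ is the value of the underlying, $X$ the present value of the strike, and $T$ the time to maturity. *)

From Stdlib Require Import Reals.
From Coquelicot Require Import Coquelicot.
Open Scope R_scope.

Definition Ncdf (x : R) : R :=
  / sqrt (2 * PI) *
  RInt_gen (fun t => exp (- t ^ 2 / 2)) (Rbar_locally m_infty) (at_point x).

Definition chi (alpha x : R) : R :=
  Ncdf (alpha / 2 * (x - / x)) - exp (alpha ^ 2 / 2) * Ncdf (- (alpha / 2) * (x + / x)).

Definition bs_d1 (S X T sigma : R) : R :=
  ln (S / X) / (sigma * sqrt T) + sigma * sqrt T / 2.
Definition bs_d2 (S X T sigma : R) : R :=
  ln (S / X) / (sigma * sqrt T) - sigma * sqrt T / 2.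
Definition bs_call (S X T sigma : R) : R :=
  S * Ncdf (bs_d1 S X T sigma) - X * Ncdf (bs_d2 S X T sigma).

From Stdlib Require Import Reals Lra.
From Coquelicot Require Import Coquelicot.
Open Scope R_scope.

(* With s = σ√T and α² = 2|log(S/X)|, the arguments of χ_α at s/α are
   ±s/2 - α²/(2s): these are d₁ and d₂ when X > S, and -d₂ and -d₁ when X < S,
   while e^{α²/2} is X/S, resp. S/X.  The second case then needs N(-d) = 1 - N(d),
   i.e. the Gaussian integral.  Writing G(x) = ∫₀ˣ e^{-t²/2} dt and
   A(x) = e^{-x²/2} ∫₀¹ e^{-x²t²/2} / (1 + t²) dt, the function G² + 2A has zero
   derivative and equals π/2 at 0; since 0 ≤ A(x) ≤ e^{-x²/2}, G tends to √(π/2),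
   hence N(d) = 1/2 + G(d)/√(2π). *)

Lemma is_derive_zero_const (f : R -> R) :
  (forall x, is_derive f x 0) -> forall x y, f x = f y.
Proof.
  intros Hf x y; destruct (Rtotal_order x y) as [Hxy | [-> | Hxy]]; auto.
  - apply (eq_is_derive f); auto.
  - symmetry; apply (eq_is_derive f); auto.
Qed.

Lemma one_add_sqr_pos (t : R) : 0 < 1 + t ^ 2.
Proof. nra. Qed.

Definition gauss (t : R) : R := exp (- t ^ 2 / 2).

Lemma gauss_pos (t : R) : 0 < gauss t.
Proof. apply exp_pos. Qed.

Lemma gauss_le_1 (t : R) : gauss t <= 1.
Proof.
  rewrite <- exp_0; unfold gauss.
  destruct (Req_dec t 0) as [-> | Ht].
  - right; f_equal; simpl; field.
  - left; apply exp_increasing; generalize (pow2_gt_0 t Ht); lra.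
Qed.

Lemma gauss_0 : gauss 0 = 1.
Proof. unfold gauss; simpl; replace (- (0 * (0 * 1)) / 2) with 0 by field; apply exp_0. Qed.

Lemma is_derive_gauss (t : R) : is_derive gauss t (- t * gauss t).
Proof. unfold gauss; auto_derive; auto; simpl; unfold Rdiv; field. Qed.

Lemma continuous_gauss (t : R) : continuous gauss t.
Proof. apply (ex_derive_continuous (V := R_NormedModule)); eexists; apply is_derive_gauss. Qed.

Lemma continuity_pt_gauss (t : R) : continuity_pt gauss t.
Proof. apply continuity_pt_filterlim, continuous_gauss. Qed.

Lemma ex_RInt_gauss (a b : R) : ex_RInt gauss a b.
Proof. apply (ex_RInt_continuous (V := R_CompleteNormedModule)); intros; apply continuous_gauss. Qed.

Definition gauss_prim (x : R) : R := RInt gauss 0 x.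

Lemma is_derive_gauss_prim (x : R) : is_derive gauss_prim x (gauss x).
Proof.
  apply (is_derive_RInt gauss gauss_prim 0).
  - apply filter_forall; intros; apply (RInt_correct (V := R_CompleteNormedModule)), ex_RInt_gauss.
  - apply continuous_gauss.
Qed.

Lemma gauss_prim_0 : gauss_prim 0 = 0.
Proof. apply (RInt_point (V := R_CompleteNormedModule)). Qed.

Lemma gauss_prim_opp (x : R) : gauss_prim (- x) = - gauss_prim x.
Proof.
  unfold gauss_prim.
  assert (H := RInt_comp_lin (V := R_CompleteNormedModule) gauss (-1) 0 0 x).
  replace (-1 * 0 + 0) with 0 in H by ring; replace (-1 * x + 0) with (- x) in H by ring.
  rewrite <- H by apply ex_RInt_gauss.
  rewrite (RInt_ext _ (fun y => scal (-1) (gauss y))).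
  - rewrite (RInt_scal (V := R_CompleteNormedModule)) by apply ex_RInt_gauss.
    unfold scal; simpl; unfold mult; simpl; ring.
  - intros y _; unfold gauss; replace ((-1 * y + 0) ^ 2) with (y ^ 2) by ring; reflexivity.
Qed.

Lemma gauss_prim_ge0 (x : R) : 0 <= x -> 0 <= gauss_prim x.
Proof.
  intros Hx; apply RInt_ge_0; auto.
  - apply ex_RInt_gauss.
  - intros; apply Rlt_le, gauss_pos.
Qed.

Lemma RInt_scaled_gauss (x : R) :
  RInt (fun t => x * gauss (x * t)) 0 1 = gauss_prim x.
Proof.
  unfold gauss_prim.
  assert (H := RInt_comp_lin (V := R_CompleteNormedModule) gauss x 0 0 1 (ex_RInt_gauss _ _)).
  replace (x * 0 + 0) with 0 in H by ring; replace (x * 1 + 0) with x in H by ring.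
  rewrite <- H; apply RInt_ext; intros t _.
  rewrite Rplus_0_r; reflexivity.
Qed.

Definition gauss_aux_integrand (x t : R) : R := gauss x * gauss (x * t) / (1 + t ^ 2).

Definition gauss_aux (x : R) : R := RInt (gauss_aux_integrand x) 0 1.

Lemma is_derive_gauss_aux_integrand (x t : R) :
  is_derive (fun u => gauss_aux_integrand u t) x (- x * gauss x * gauss (x * t)).
Proof.
  unfold gauss_aux_integrand, gauss; auto_derive.
  - generalize (one_add_sqr_pos t); simpl; lra.
  - simpl; unfold Rdiv; field; generalize (one_add_sqr_pos t); simpl; lra.
Qed.

Lemma ex_RInt_gauss_aux_integrand (x : R) : ex_RInt (gauss_aux_integrand x) 0 1.
Proof.
  apply (ex_RInt_continuous (V := R_CompleteNormedModule)); intros t _.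
  apply (ex_derive_continuous (V := R_NormedModule)); unfold gauss_aux_integrand, gauss; auto_derive.
  generalize (one_add_sqr_pos t); lra.
Qed.

Lemma is_derive_gauss_aux (x : R) : is_derive gauss_aux x (- gauss x * gauss_prim x).
Proof.
  set (df u t := - u * gauss u * gauss (u * t)).
  assert (Hdf : forall u t, Derive (fun u => gauss_aux_integrand u t) u = df u t)
    by (intros; apply is_derive_unique, is_derive_gauss_aux_integrand).
  assert (Hint : RInt (fun t => Derive (fun u => gauss_aux_integrand u t) x) 0 1
                 = - gauss x * gauss_prim x).
  { transitivity (RInt (fun t => scal (- gauss x) (x * gauss (x * t))) 0 1).
    - apply RInt_ext; intros t _; rewrite Hdf.
      unfold df, scal; simpl; unfold mult; simpl; ring.
    - rewrite (RInt_scal (V := R_CompleteNormedModule)), RInt_scaled_gauss; [reflexivity |].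
      apply (ex_RInt_continuous (V := R_CompleteNormedModule)); intros t _.
      apply (ex_derive_continuous (V := R_NormedModule)); unfold gauss; auto_derive; auto. }
  rewrite <- Hint; apply (is_derive_RInt_param gauss_aux_integrand 0 1 x).
  - apply filter_forall; intros u t _; eexists; apply is_derive_gauss_aux_integrand.
  - intros t _; apply (continuity_2d_pt_ext df); [intros; symmetry; apply Hdf |].
    unfold df; apply continuity_2d_pt_mult.
    + apply continuity_2d_pt_mult.
      * apply continuity_2d_pt_opp, continuity_2d_pt_id1.
      * apply (continuity_1d_2d_pt_comp gauss (fun u v => u));
          [apply continuity_pt_gauss | apply continuity_2d_pt_id1].
    + apply (continuity_1d_2d_pt_comp gauss (fun u v => u * v)); [apply continuity_pt_gauss |].
      apply continuity_2d_pt_mult; [apply continuity_2d_pt_id1 | apply continuity_2d_pt_id2].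
  - apply filter_forall; intros; apply ex_RInt_gauss_aux_integrand.
Qed.

Lemma gauss_aux_0 : gauss_aux 0 = PI / 4.
Proof.
  unfold gauss_aux.
  rewrite (RInt_ext _ (fun t => / (1 + t²))).
  - rewrite (is_RInt_unique _ 0 1 (atan 1 - atan 0)), atan_1, atan_0; [field |].
    apply (is_RInt_derive atan); intros t _.
    + apply is_derive_atan.
    + apply (ex_derive_continuous (V := R_NormedModule)); auto_derive.
      generalize (one_add_sqr_pos t); unfold Rsqr; simpl; lra.
  - intros t _; unfold gauss_aux_integrand; rewrite Rmult_0_l, gauss_0; unfold Rsqr; simpl; field.
    generalize (one_add_sqr_pos t); simpl; lra.
Qed.

Lemma gauss_prim_sqr_add_aux (x : R) : gauss_prim x ^ 2 + 2 * gauss_aux x = PI / 2.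
Proof.
  assert (Hconst : forall x y, gauss_prim x ^ 2 + 2 * gauss_aux x = gauss_prim y ^ 2 + 2 * gauss_aux y).
  { apply is_derive_zero_const; intros u.
    replace 0 with (plus (INR 2 * gauss u * gauss_prim u ^ 1) (2 * (- gauss u * gauss_prim u)))
      by (unfold plus; simpl; ring).
    apply (is_derive_plus (V := R_NormedModule) (fun u => gauss_prim u ^ 2) (fun u => 2 * gauss_aux u)).
    - apply (is_derive_pow gauss_prim 2), is_derive_gauss_prim.
    - apply (is_derive_scal gauss_aux), is_derive_gauss_aux. }
  rewrite (Hconst x 0), gauss_prim_0, gauss_aux_0; field.
Qed.

Lemma gauss_aux_bounds (x : R) : 0 <= gauss_aux x <= gauss x.
Proof.
  assert (Hint := ex_RInt_gauss_aux_integrand x).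
  unfold gauss_aux; split.
  - apply RInt_ge_0; [lra | exact Hint |]; intros t _; unfold gauss_aux_integrand.
    apply Rlt_le, Rdiv_lt_0_compat; [apply Rmult_lt_0_compat; apply gauss_pos | apply one_add_sqr_pos].
  - apply Rle_trans with (RInt (fun _ => gauss x) 0 1).
    + apply RInt_le; [lra | exact Hint | apply ex_RInt_const |]; intros t _; unfold gauss_aux_integrand.
      assert (Hinv : 0 < / (1 + t ^ 2) <= 1).
      { split; [apply Rinv_0_lt_compat, one_add_sqr_pos |].
        rewrite <- Rinv_1; apply Rinv_le_contravar; [lra | generalize (pow2_ge_0 t); lra]. }
      assert (Hle : gauss (x * t) * / (1 + t ^ 2) <= 1)
        by (generalize (gauss_pos (x * t)) (gauss_le_1 (x * t)); nra).
      generalize (gauss_pos x); unfold Rdiv; nra.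
    + rewrite RInt_const; unfold scal; simpl; unfold mult; simpl; lra.
Qed.

Lemma sqrt_PI2_pos : 0 < sqrt (PI / 2).
Proof. apply sqrt_lt_R0; generalize PI_RGT_0; lra. Qed.

Lemma is_lim_gauss : is_lim gauss p_infty 0.
Proof.
  apply (is_lim_comp (fun y => exp y) (fun t => - t ^ 2 / 2) p_infty 0 m_infty).
  - exact is_lim_exp_m.
  - apply (is_lim_ext (fun t => - (t ^ 2 / 2))); [intros; field |].
    apply (is_lim_opp _ p_infty p_infty), (is_lim_le_p_loc (fun t => t)).
    + exists 2; intros; nra.
    + apply is_lim_id.
  - exists 0; intros; discriminate.
Qed.

Lemma gauss_prim_tail (x : R) :
  0 <= x -> 0 <= sqrt (PI / 2) - gauss_prim x <= 2 / sqrt (PI / 2) * gauss x.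
Proof.
  intros Hx.
  set (c := sqrt (PI / 2)).
  assert (Hc : 0 < c) by apply sqrt_PI2_pos.
  assert (Hc2 : c * c = PI / 2) by (apply sqrt_sqrt; generalize PI_RGT_0; lra).
  assert (HG := gauss_prim_ge0 x Hx).
  assert (HA := gauss_aux_bounds x).
  assert (Hsq := gauss_prim_sqr_add_aux x).
  assert (Hdiff : (c - gauss_prim x) * (c + gauss_prim x) = 2 * gauss_aux x) by nra.
  assert (Hnn : 0 <= c - gauss_prim x) by nra.
  split; [exact Hnn |].
  apply (Rmult_le_reg_l c); [exact Hc |].
  replace (c * (2 / c * gauss x)) with (2 * gauss x) by (field; lra).
  nra.
Qed.

Lemma is_lim_gauss_prim_p_infty : is_lim gauss_prim p_infty (sqrt (PI / 2)).
Proof.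
  set (c := sqrt (PI / 2)).
  apply (is_lim_ext (fun x => c - (c - gauss_prim x))); [intros; ring |].
  replace (Finite c) with (Finite (c - 0)) by (f_equal; ring).
  apply is_lim_minus'; [apply is_lim_const |].
  apply (is_lim_le_le_loc (fun _ => 0) (fun x => 2 / c * gauss x)).
  - exists 0; intros x Hx; apply gauss_prim_tail; lra.
  - apply is_lim_const.
  - replace (Finite 0) with (Rbar_mult (2 / c) 0) by (simpl; f_equal; ring).
    apply is_lim_scal_l, is_lim_gauss.
Qed.

Lemma is_lim_gauss_prim_m_infty : is_lim gauss_prim m_infty (- sqrt (PI / 2)).
Proof.
  apply (is_lim_ext (fun x => - gauss_prim (- x))).
  - intros x; rewrite gauss_prim_opp; ring.
  - apply (is_lim_opp _ _ (sqrt (PI / 2))), (is_lim_comp gauss_prim (fun x => - x) _ _ p_infty).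
    + apply is_lim_gauss_prim_p_infty.
    + apply (is_lim_opp _ m_infty m_infty), is_lim_id.
    + exists 0; intros; discriminate.
Qed.

Lemma is_RInt_gen_gauss (d : R) :
  is_RInt_gen gauss (Rbar_locally m_infty) (at_point d) (gauss_prim d + sqrt (PI / 2)).
Proof.
  apply (is_RInt_gen_ext (Derive gauss_prim)).
  - apply filter_forall; intros; apply is_derive_unique, is_derive_gauss_prim.
  - replace (gauss_prim d + sqrt (PI / 2)) with (gauss_prim d - - sqrt (PI / 2)) by ring.
    apply is_RInt_gen_Derive.
    + apply filter_forall; intros; eexists; apply is_derive_gauss_prim.
    + apply filter_forall; intros [a b] t _.
      apply (continuous_ext gauss); [intros; symmetry; apply is_derive_unique, is_derive_gauss_prim |].
      apply continuous_gauss.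
    + apply is_lim_gauss_prim_m_infty.
    + intros P HP; apply (locally_singleton _ _ HP).
Qed.

Lemma sqrt_2PI : sqrt (2 * PI) = 2 * sqrt (PI / 2).
Proof.
  replace (2 * PI) with (2 * 2 * (PI / 2)) by field.
  rewrite sqrt_mult, sqrt_square; [reflexivity | lra | lra | generalize PI_RGT_0; lra].
Qed.

Lemma Ncdf_gauss_prim (d : R) : Ncdf d = / 2 + gauss_prim d / (2 * sqrt (PI / 2)).
Proof.
  unfold Ncdf; change (fun t => exp (- t ^ 2 / 2)) with gauss.
  rewrite (is_RInt_gen_unique _ _ (is_RInt_gen_gauss d)), sqrt_2PI.
  field; apply Rgt_not_eq, sqrt_PI2_pos.
Qed.

Lemma Ncdf_opp (d : R) : Ncdf (- d) = 1 - Ncdf d.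
Proof.
  rewrite !Ncdf_gauss_prim, gauss_prim_opp; field.
  apply Rgt_not_eq, sqrt_PI2_pos.
Qed.

Lemma chi_scaled (a s : R) : 0 < a -> 0 < s ->
  chi a (s / a) =
  Ncdf (s / 2 - a ^ 2 / (2 * s)) - exp (a ^ 2 / 2) * Ncdf (- (s / 2) - a ^ 2 / (2 * s)).
Proof.
  intros Ha Hs; unfold chi.
  replace (a / 2 * (s / a - / (s / a))) with (s / 2 - a ^ 2 / (2 * s)) by (field; lra).
  replace (- (a / 2) * (s / a + / (s / a))) with (- (s / 2) - a ^ 2 / (2 * s)) by (field; lra).
  reflexivity.
Qed.

Lemma ln_div_neg (a b : R) : 0 < a -> a < b -> ln (a / b) < 0.
Proof.
  intros Ha Hab; rewrite <- ln_1; apply ln_increasing.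
  - apply Rdiv_lt_0_compat; lra.
  - apply (Rmult_lt_reg_r b); [lra |]; unfold Rdiv; rewrite Rmult_assoc, Rinv_l; lra.
Qed.

Lemma ln_div_pos (a b : R) : 0 < b -> b < a -> 0 < ln (a / b).
Proof.
  intros Hb Hba; rewrite <- ln_1; apply ln_increasing; [lra |].
  apply (Rmult_lt_reg_r b); [lra |]; unfold Rdiv; rewrite Rmult_assoc, Rinv_l; lra.
Qed.

Lemma bs_call_out_of_the_money (S X T sigma : R) :
  0 < S -> 0 < X -> 0 < T -> 0 < sigma -> S < X ->
  let alpha := sqrt (2 * - ln (S / X)) in
  bs_call S X T sigma = S * chi alpha (sigma * sqrt T / alpha).
Proof.
  intros HS HX HT Hsig HSX alpha.
  assert (HL := ln_div_neg S X HS HSX).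
  assert (Hs : 0 < sigma * sqrt T) by (apply Rmult_lt_0_compat; [lra | apply sqrt_lt_R0; lra]).
  assert (Ha : 0 < alpha) by (apply sqrt_lt_R0; lra).
  assert (Ha2 : alpha ^ 2 = 2 * - ln (S / X)) by (apply pow2_sqrt; lra).
  assert (Hexp : exp (2 * - ln (S / X) / 2) = X / S).
  { replace (2 * - ln (S / X) / 2) with (- ln (S / X)) by field.
    rewrite exp_Ropp, exp_ln by (apply Rdiv_lt_0_compat; lra); field; lra. }
  unfold bs_call, bs_d1, bs_d2; set (s := sigma * sqrt T) in *.
  rewrite chi_scaled, Ha2, Hexp by assumption.
  replace (s / 2 - 2 * - ln (S / X) / (2 * s))
    with (ln (S / X) / s + s / 2) by (field; lra).
  replace (- (s / 2) - 2 * - ln (S / X) / (2 * s))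
    with (ln (S / X) / s - s / 2) by (field; lra).
  field; lra.
Qed.

Lemma bs_call_in_the_money (S X T sigma : R) :
  0 < S -> 0 < X -> 0 < T -> 0 < sigma -> X < S ->
  let alpha := sqrt (2 * ln (S / X)) in
  bs_call S X T sigma = S - X + X * chi alpha (sigma * sqrt T / alpha).
Proof.
  intros HS HX HT Hsig HXS alpha.
  assert (HL := ln_div_pos S X HX HXS).
  assert (Hs : 0 < sigma * sqrt T) by (apply Rmult_lt_0_compat; [lra | apply sqrt_lt_R0; lra]).
  assert (Ha : 0 < alpha) by (apply sqrt_lt_R0; lra).
  assert (Ha2 : alpha ^ 2 = 2 * ln (S / X)) by (apply pow2_sqrt; lra).
  assert (Hexp : exp (2 * ln (S / X) / 2) = S / X).
  { replace (2 * ln (S / X) / 2) with (ln (S / X)) by field.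
    apply exp_ln, Rdiv_lt_0_compat; lra. }
  unfold bs_call, bs_d1, bs_d2; set (s := sigma * sqrt T) in *.
  rewrite chi_scaled, Ha2, Hexp by assumption.
  replace (s / 2 - 2 * ln (S / X) / (2 * s))
    with (- (ln (S / X) / s - s / 2)) by (field; lra).
  replace (- (s / 2) - 2 * ln (S / X) / (2 * s))
    with (- (ln (S / X) / s + s / 2)) by (field; lra).
  rewrite !Ncdf_opp; field; lra.
Qed.

Theorem proposition2 (S X T : R) :
  0 < S -> 0 < X -> 0 < T -> X <> S ->
  let alpha := sqrt (2 * Rabs (ln (S / X))) in
  forall sigma : R, 0 < sigma ->
    (X > S -> bs_call S X T sigma = S * chi alpha (sigma * sqrt T / alpha)) /\
    (X < S -> bs_call S X T sigma = S - X + X * chi alpha (sigma * sqrt T / alpha)).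
Proof.
  intros HS HX HT _ alpha sigma Hsig; split; intros HSX; unfold alpha.
  - rewrite Rabs_left by (apply ln_div_neg; lra).
    apply bs_call_out_of_the_money; assumption.
  - rewrite Rabs_right by (apply Rle_ge, Rlt_le, ln_div_pos; lra).
    apply bs_call_in_the_money; assumption.
Qed.
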